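(* Let $H$ be a Hopf algebra with antipode $S$, projective as a $k$-module, $A$ a left $H$-comodule algebra, and $\varphi:H\to A$ a left $H$-colinear map with $\varphi(1_H)=1_A$. Assume one of: (1) $S^2=I_H$, $\varphi(H)\subseteq Z(A)$ and $\varphi(hl)=\varphi(lh)$ for all $h,l\in H$; or (2) $S$ is bijective and $\varphi(H)\subseteq k1_A$. Then $\gamma^\varphi(h)(l)=\varphi(hS(l))$ defines a total $A$-integral for $(H,A,H)$, and the forgetful functor ${}^H\mathcal M_A\to\mathcal M_A$ is separable.
   Context: $k$ commutative ring; Sweedler notation $\Delta(h)=\sum h_{(1)}\otimes h_{(2)}$, $\rho_A(a)=\sum a_{<-1>}\otimes a_{<0>}$. ${}^H\mathcal M_A$ (relative Hopf modules) is the category of right $A$-modules $M$ with a left $H$-coaction such that $\rho_M(ma)=\sum m_{<-1>}a_{<-1>}\otimes m_{<0>}a_{<0>}$, with $A$-linear $H$-colinear maps. An $A$-integral for the Doi-Hopf datum $(H,A,H)$ ($H$ acting on itself by multiplication) is a $k$-linear $\gamma:H\to\mathrm{Hom}(H,A)$ with, for all $a\in A$, $c,d\in H$: (i) $\sum a_{<0>}\gamma(ca_{<-2>})(da_{<-1>})=\gamma(c)(d)\,a$; (ii) $\sum c_{(1)}\otimes\gamma(c_{(2)})(d)=\sum d_{(2)}\gamma(c)(d_{(1)})_{<-1>}\otimes\gamma(c)(d_{(1)})_{<0>}$; total if $\sum\gamma(c_{(1)})(c_{(2)})=\varepsilon(c)1_A$. A functor $F$ is separable if $\mathrm{Hom}(M,N)\to\mathrm{Hom}(FM,FN)$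 has a left inverse natural in $M,N$. *)

(* Tensors U (x)_k V are represented by finite lists of pairs (sums of
   simple tensors); two such lists represent the same tensor iff every
   k-bilinear map into every k-module takes the same value on them
   (universal property / Yoneda). *)
From HB Require Import structures.
From mathcomp Require Import all_boot all_order all_algebra.
Set Implicit Arguments. Unset Strict Implicit. Unset Printing Implicit Defensive.
Import GRing.Theory.
Local Open Scope ring_scope.

Section Defs.
Variable k : comPzRingType.

Definition klin (U V : lmodType k) (f : U -> V) :=
  forall (a : k) (u v : U), f (a *: u + v) = a *: f u + f v.

Definition kbilin (U V M : lmodType k) (b : U -> V -> M) :=
  (forall v, klin (fun u => b u v)) /\ (forall u, klin (b u)).

Definition ktrilin (U V W M : lmodType k) (b : U -> V -> W -> M) :=
  (forall v w, klin (fun u => b u v w)) /\ (forall u w, klin (fun v => b u v w))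
  /\ (forall u v, klin (b u v)).

Definition teq2 (U V : lmodType k) (t t' : seq (U * V)) :=
  forall (M : lmodType k) (b : U -> V -> M), kbilin b ->
    \sum_(p <- t) b p.1 p.2 = \sum_(p <- t') b p.1 p.2.

Definition teq3 (U V W : lmodType k) (t t' : seq (U * V * W)) :=
  forall (M : lmodType k) (b : U -> V -> W -> M), ktrilin b ->
    \sum_(p <- t) b p.1.1 p.1.2 p.2 = \sum_(p <- t') b p.1.1 p.1.2 p.2.

Definition tlin (U U' V' : lmodType k) (f : U -> seq (U' * V')) :=
  forall (a : k) (u v : U),
    teq2 (f (a *: u + v)) ([seq (a *: p.1, p.2) | p <- f u] ++ f v).

Definition kprojective (P : lmodType k) :=
  forall (M N : lmodType k) (f : M -> N) (g : P -> N),
    klin f -> klin g -> (forall y, exists x, f x = y) ->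
    exists h : P -> M, klin h /\ forall x, f (h x) = g x.

Section Hopf.
Variable H : algType k.
Variables (Delta : H -> seq (H * H)) (eps : H -> k) (S : H -> H).

Definition is_hopf :=
  tlin Delta /\
  (forall h, teq3 [seq (p.1, q.1, q.2) | p <- Delta h, q <- Delta p.2]
                  [seq (q.1, q.2, p.2) | p <- Delta h, q <- Delta p.1]) /\
  klin (eps : H -> k^o) /\
  (forall h, \sum_(p <- Delta h) eps p.1 *: p.2 = h) /\
  (forall h, \sum_(p <- Delta h) eps p.2 *: p.1 = h) /\
  (forall h l, teq2 (Delta (h * l))
                    [seq (p.1 * q.1, p.2 * q.2) | p <- Delta h, q <- Delta l]) /\
  teq2 (Delta 1) [:: (1, 1)] /\
  (forall h l, eps (h * l) = eps h * eps l) /\ eps 1 = 1 /\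
  klin S /\
  (forall h, \sum_(p <- Delta h) S p.1 * p.2 = (eps h)%:A) /\
  (forall h, \sum_(p <- Delta h) p.1 * S p.2 = (eps h)%:A).

Variable A : algType k.
Variable rhoA : A -> seq (H * A).

Definition is_comod_alg :=
  [/\ tlin rhoA,
      forall a, teq3 [seq (q.1, q.2, p.2) | p <- rhoA a, q <- Delta p.1]
                     [seq (p.1, q.1, q.2) | p <- rhoA a, q <- rhoA p.2],
      forall a, \sum_(p <- rhoA a) eps p.1 *: p.2 = a,
      forall a b, teq2 (rhoA (a * b))
                       [seq (p.1 * q.1, p.2 * q.2) | p <- rhoA a, q <- rhoA b] &
      teq2 (rhoA 1) [:: (1, 1)]].

(* A-integral for the Doi-Hopf datum (H,A,H); gamma c d stands for gamma(c)(d) *)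
Definition is_A_integral (gamma : H -> H -> A) :=
  [/\ kbilin gamma,
      forall a c d,
        \sum_(p <- [seq (q.1, q.2, p.2) | p <- rhoA a, q <- Delta p.1])
            p.2 * gamma (c * p.1.1) (d * p.1.2) = gamma c d * a &
      forall c d,
        teq2 [seq (p.1, gamma p.2 d) | p <- Delta c]
             [seq (p.2 * q.1, q.2) | p <- Delta d, q <- rhoA (gamma c p.1)]].

Definition is_total_A_integral (gamma : H -> H -> A) :=
  is_A_integral gamma /\
  forall c, \sum_(p <- Delta c) gamma p.1 p.2 = (eps c)%:A.

Record relHopfMod := RelHopfMod {
  rhm_car :> lmodType k;
  rhm_act : rhm_car -> A -> rhm_car;
  rhm_coact : rhm_car -> seq (H * rhm_car);
  rhm_act_bilin : kbilin rhm_act;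
  rhm_act1 : forall m, rhm_act m 1 = m;
  rhm_actM : forall m a b, rhm_act (rhm_act m a) b = rhm_act m (a * b);
  rhm_coact_lin : tlin rhm_coact;
  rhm_coassoc : forall m,
    teq3 [seq (q.1, q.2, p.2) | p <- rhm_coact m, q <- Delta p.1]
         [seq (p.1, q.1, q.2) | p <- rhm_coact m, q <- rhm_coact p.2];
  rhm_counit : forall m, \sum_(p <- rhm_coact m) eps p.1 *: p.2 = m;
  rhm_compat : forall m a,
    teq2 (rhm_coact (rhm_act m a))
         [seq (p.1 * q.1, rhm_act p.2 q.2) | p <- rhm_coact m, q <- rhoA a]
}.

Definition Alin (M N : relHopfMod) (f : M -> N) :=
  klin f /\ forall m a, f (rhm_act m a) = rhm_act (f m) a.

Definition relHopf_hom (M N : relHopfMod) (f : M -> N) :=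
  Alin f /\
  forall m, teq2 (rhm_coact (f m)) [seq (p.1, f p.2) | p <- rhm_coact m].

(* separability of the forgetful functor ^H M_A -> M_A :
   the map Hom_{^H M_A}(M,N) -> Hom_A(M,N) has a left inverse P,
   natural in M and N. *)
Definition forget_separable :=
  exists P : forall M N : relHopfMod, (M -> N) -> (M -> N),
    [/\ (forall (M N : relHopfMod) (f : M -> N), Alin f -> relHopf_hom (P M N f)),
        (forall (M N : relHopfMod) (f : M -> N), relHopf_hom f ->
            forall m, P M N f m = f m) &
        (forall (M' M N N' : relHopfMod) (g : M' -> M) (f : M -> N) (h : N -> N'),
            relHopf_hom g -> Alin f -> relHopf_hom h ->
            forall m, P M' N' (fun x => h (f (g x))) m = h (P M N f (g m)))].

End Hopf.
End Defs.

From HB Require Import structures.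
From mathcomp Require Import all_boot all_order all_algebra.
Set Implicit Arguments. Unset Strict Implicit. Unset Printing Implicit Defensive.
Import GRing.Theory.
Local Open Scope ring_scope.

(* A total A-integral gamma gives a retraction of the forgetful map
   Hom^H_A(M, N) -> Hom_A(M, N), natural in M and N:
   f |-> [m |-> f(m_[0])_[0] gamma(m_[-1])(f(m_[0])_[-1])].
   For gamma(h)(l) = phi(h S(l)), totality and condition (i) come from
   h_(1) S(h_(2)) = eps(h) 1 (and, for (i), centrality of phi(H)).  Condition (ii)
   comes from the colinearity of phi together with Delta(S h) = S h_(2) (x) S h_(1):
   in case (1) the trace property of phi moves the factor S(l) across the tensor
   sign, where S^2 = I cancels it; in case (2) phi(H) has trivial coaction and the
   inverse of S plays the same role. *)

Section Linearity.
Variable k : comPzRingType.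
Implicit Types U V W M : lmodType k.

Lemma klin_of U V (f : U -> V) :
  (forall a u, f (a *: u) = a *: f u) -> (forall u v, f (u + v) = f u + f v) -> klin f.
Proof. by move=> fZ fD a u v; rewrite fD fZ. Qed.

Lemma klin0 U V (f : U -> V) : klin f -> f 0 = 0.
Proof.
move=> f_lin; have := f_lin 1 0 0; rewrite scaler0 addr0 scale1r => f0.
by move: (congr1 (fun x => x - f 0) f0); rewrite /= addrK subrr.
Qed.

Lemma klinD U V (f : U -> V) : klin f -> forall u v, f (u + v) = f u + f v.
Proof. by move=> f_lin u v; have := f_lin 1 u v; rewrite !scale1r. Qed.

Lemma klinZ U V (f : U -> V) : klin f -> forall a u, f (a *: u) = a *: f u.
Proof. by move=> f_lin a u; rewrite -[a *: u]addr0 f_lin klin0 // addr0. Qed.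

Lemma klin_sum U V (f : U -> V) : klin f -> forall I (s : seq I) (P : pred I) (F : I -> U),
  f (\sum_(i <- s | P i) F i) = \sum_(i <- s | P i) f (F i).
Proof. by move=> f_lin I s P F; apply: (big_morph f (klinD f_lin) (klin0 f_lin)). Qed.

Lemma klin_id U : klin (fun x : U => x).
Proof. by []. Qed.

Lemma klin_comp U V W (g : V -> W) (f : U -> V) :
  klin g -> klin f -> klin (fun x => g (f x)).
Proof. by move=> g_lin f_lin a u v; rewrite f_lin g_lin. Qed.

Lemma klin_sum_fun U V I (s : seq I) (F : I -> U -> V) :
  (forall i, klin (F i)) -> klin (fun x => \sum_(i <- s) F i x).
Proof.
move=> F_lin; apply: klin_of => [a u|u v].
  by rewrite scaler_sumr; apply: eq_bigr => i _; rewrite klinZ.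
by rewrite -big_split; apply: eq_bigr => i _; rewrite klinD.
Qed.

Lemma klin_mulr U (R : algType k) (f : U -> R) (w : R) :
  klin f -> klin (fun x => f x * w).
Proof.
move=> f_lin; apply: klin_of => [a u|u v]; first by rewrite (klinZ f_lin) -scalerAl.
by rewrite (klinD f_lin) mulrDl.
Qed.

Lemma klin_mull U (R : algType k) (f : U -> R) (w : R) :
  klin f -> klin (fun x => w * f x).
Proof.
move=> f_lin; apply: klin_of => [a u|u v]; first by rewrite (klinZ f_lin) -scalerAr.
by rewrite (klinD f_lin) mulrDr.
Qed.

Lemma kbilinl U V M (b : U -> V -> M) : kbilin b -> forall v, klin (b^~ v).
Proof. by case. Qed.

Lemma kbilinr U V M (b : U -> V -> M) : kbilin b -> forall u, klin (b u).
Proof. by case. Qed.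

Lemma kbilin_of U V M (b : U -> V -> M) :
  (forall v, klin (fun u => b u v)) -> (forall u, klin (fun v => b u v)) -> kbilin b.
Proof. by split. Qed.

Lemma ktrilin_of U V W M (b : U -> V -> W -> M) :
  (forall v w, klin (fun u => b u v w)) -> (forall u w, klin (fun v => b u v w)) ->
  (forall u v, klin (fun w => b u v w)) -> ktrilin b.
Proof. by split=> //; split. Qed.

Lemma klin_bilinl U V W M (b : V -> W -> M) (f : U -> V) (c : W) :
  kbilin b -> klin f -> klin (fun x => b (f x) c).
Proof. by move=> b_lin; apply: klin_comp (kbilinl b_lin c). Qed.

Lemma klin_bilinr U V W M (b : V -> W -> M) (f : U -> W) (c : V) :
  kbilin b -> klin f -> klin (fun x => b c (f x)).
Proof. by move=> b_lin; apply: klin_comp (kbilinr b_lin c). Qed.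

Lemma klin_tensor_sum U U' V' M (f : U -> seq (U' * V')) (G : U' -> V' -> M) :
  tlin f -> kbilin G -> klin (fun x => \sum_(p <- f x) G p.1 p.2).
Proof.
move=> f_lin G_lin a u v; rewrite (f_lin a u v _ G G_lin) big_cat big_map /=.
by rewrite scaler_sumr; congr (_ + _); apply: eq_bigr => p _; rewrite (klinZ (kbilinl G_lin _)).
Qed.

Lemma klin_tensor_sum_pair U U' V' M (f : U -> seq (U' * V')) (F : U' * V' -> M) :
  tlin f -> kbilin (fun a b => F (a, b)) -> klin (fun x => \sum_(p <- f x) F p).
Proof.
move=> f_lin F_lin; have eF x : \sum_(p <- f x) F p = \sum_(p <- f x) F (p.1, p.2).
  by apply: eq_bigr => -[].
by move=> a u v; rewrite !eF; apply: (klin_tensor_sum f_lin F_lin).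
Qed.

Lemma tlin_comp U V U' V' (g : V -> seq (U' * V')) (f : U -> V) :
  tlin g -> klin f -> tlin (fun x => g (f x)).
Proof. by move=> g_lin f_lin a u v; rewrite f_lin; apply: g_lin. Qed.

End Linearity.

(* Proves [klin] goals for expressions built from the linear and bilinear maps in
   context by composition, products and sums over tensors. *)
Ltac lin :=
  cbv beta; simpl;
  first
  [ exact: klin_id
  | assumption
  | match goal with hb : kbilin ?b |- _ => exact: (kbilinr hb) end
  | solve [apply: klin_sum_fun => ?; lin]
  | solve [apply: klin_tensor_sum_pair; [assumption|apply: kbilin_of => ?; lin]]
  | solve [apply: klin_tensor_sum_pair;
           [apply: tlin_comp; [assumption|lin]|apply: kbilin_of => ?; lin]]
  | match goal with |- klin (fun x => @?f x * ?w) =>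
      solve [apply: (@klin_mulr _ _ _ f w); lin] end
  | match goal with |- klin (fun x => ?w * @?f x) =>
      solve [apply: (@klin_mull _ _ _ f w); lin] end
  | match goal with |- klin (fun x => ?b (@?f x) ?c) =>
      match goal with hb : kbilin b |- _ =>
        solve [apply: (@klin_bilinl _ _ _ _ _ b f c hb); lin] end end
  | match goal with |- klin (fun x => ?b ?c (@?f x)) =>
      match goal with hb : kbilin b |- _ =>
        solve [apply: (@klin_bilinr _ _ _ _ _ b f c hb); lin] end end
  | match goal with |- klin (fun x => ?g (@?f x)) =>
      match goal with hg : klin g |- _ =>
        solve [apply: (@klin_comp _ _ _ _ g f hg); lin] end end
  ].
Ltac bilin := apply: kbilin_of => ?; lin.
Ltac trilin := apply: ktrilin_of => ? ?; lin.

Section HopfAlgebra.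
Variable k : comPzRingType.
Variable H : algType k.
Variables (Delta : H -> seq (H * H)) (eps : H -> k) (S : H -> H).
Hypothesis Delta_lin : tlin Delta.
Hypothesis coassoc : forall h, teq3 [seq (p.1, q.1, q.2) | p <- Delta h, q <- Delta p.2]
                                    [seq (q.1, q.2, p.2) | p <- Delta h, q <- Delta p.1].
Hypothesis counitL : forall h, \sum_(p <- Delta h) eps p.1 *: p.2 = h.
Hypothesis counitR : forall h, \sum_(p <- Delta h) eps p.2 *: p.1 = h.
Hypothesis DeltaM : forall h l,
  teq2 (Delta (h * l)) [seq (p.1 * q.1, p.2 * q.2) | p <- Delta h, q <- Delta l].
Hypothesis Delta1 : teq2 (Delta 1) [:: (1, 1)].
Hypothesis epsM : forall h l, eps (h * l) = eps h * eps l.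
Hypothesis eps1 : eps 1 = 1.
Hypothesis S_lin : klin S.
Hypothesis antipodeL : forall h, \sum_(p <- Delta h) S p.1 * p.2 = (eps h)%:A.
Hypothesis antipodeR : forall h, \sum_(p <- Delta h) p.1 * S p.2 = (eps h)%:A.

Lemma coassoc_sum (M : lmodType k) (T : H -> H -> H -> M) h : ktrilin T ->
  \sum_(p <- Delta h) \sum_(q <- Delta p.2) T p.1 q.1 q.2 =
  \sum_(p <- Delta h) \sum_(q <- Delta p.1) T q.1 q.2 p.2.
Proof. by move=> T_lin; have := coassoc h T_lin; rewrite !big_allpairs_dep. Qed.

Lemma DeltaM_sum (M : lmodType k) (b : H -> H -> M) h l : kbilin b ->
  \sum_(p <- Delta (h * l)) b p.1 p.2 =
  \sum_(p <- Delta h) \sum_(q <- Delta l) b (p.1 * q.1) (p.2 * q.2).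
Proof. by move=> b_lin; rewrite (DeltaM h l b_lin) big_allpairs_dep. Qed.

Lemma Delta1_sum (M : lmodType k) (b : H -> H -> M) : kbilin b ->
  \sum_(p <- Delta 1) b p.1 p.2 = b 1 1.
Proof. by move=> b_lin; rewrite (Delta1 b_lin) big_seq1. Qed.

Lemma counitL_sum (M : lmodType k) (f : H -> M) h : klin f ->
  \sum_(p <- Delta h) eps p.1 *: f p.2 = f h.
Proof.
move=> f_lin; rewrite -{2}(counitL h) (klin_sum f_lin).
by apply: eq_bigr => p _; rewrite (klinZ f_lin).
Qed.

Lemma counitR_sum (M : lmodType k) (f : H -> M) h : klin f ->
  \sum_(p <- Delta h) eps p.2 *: f p.1 = f h.
Proof.
move=> f_lin; rewrite -{2}(counitR h) (klin_sum f_lin).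
by apply: eq_bigr => p _; rewrite (klinZ f_lin).
Qed.

Lemma antipode1 : S 1 = 1.
Proof.
have b_lin : kbilin (fun x y : H => S x * y) by bilin.
by have := antipodeL 1; rewrite (Delta1_sum b_lin) eps1 scale1r mulr1.
Qed.

(* Convolution in Hom(H (x) H, H), maps out of H (x) H being bilinear maps. *)
Definition conv2 (F G : H -> H -> H) h l :=
  \sum_(p <- Delta h) \sum_(q <- Delta l) F p.1 q.1 * G p.2 q.2.

Definition conv2_unit (x y : H) : H := (eps x * eps y)%:A.

Lemma eq_conv2 F F' G G' h l :
  (forall x y, F x y = F' x y) -> (forall x y, G x y = G' x y) ->
  conv2 F G h l = conv2 F' G' h l.
Proof. by move=> eF eG; apply: eq_bigr => p _; apply: eq_bigr => q _; rewrite eF eG. Qed.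

Lemma conv2A F G K h l : kbilin F -> kbilin G -> kbilin K ->
  conv2 (conv2 F G) K h l = conv2 F (conv2 G K) h l.
Proof.
move=> F_lin G_lin K_lin; rewrite /conv2.
transitivity (\sum_(p <- Delta h) \sum_(p' <- Delta p.1) \sum_(q <- Delta l)
   \sum_(q' <- Delta q.2) F p'.1 q.1 * G p'.2 q'.1 * K p.2 q'.2).
  apply: eq_bigr => p _.
  transitivity (\sum_(p' <- Delta p.1) \sum_(q <- Delta l) \sum_(q' <- Delta q.1)
     F p'.1 q'.1 * G p'.2 q'.2 * K p.2 q.2).
    rewrite exchange_big; apply: eq_bigr => q _; rewrite mulr_suml.
    by apply: eq_bigr => p' _; rewrite mulr_suml.
  apply: eq_bigr => p' _; symmetry.
  by apply: (coassoc_sum (T := fun x y z => F p'.1 x * G p'.2 y * K p.2 z)); trilin.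
transitivity (\sum_(p <- Delta h) \sum_(p' <- Delta p.2) \sum_(q <- Delta l)
   \sum_(q' <- Delta q.2) F p.1 q.1 * G p'.1 q'.1 * K p'.2 q'.2).
  symmetry; apply: (coassoc_sum (T := fun x y z => \sum_(q <- Delta l)
    \sum_(q' <- Delta q.2) F x q.1 * G y q'.1 * K z q'.2)); trilin.
apply: eq_bigr => p _; rewrite exchange_big; apply: eq_bigr => q _.
rewrite mulr_sumr; apply: eq_bigr => p' _; rewrite mulr_sumr.
by apply: eq_bigr => q' _; rewrite mulrA.
Qed.

Lemma conv2_unitl F h l : kbilin F -> conv2 conv2_unit F h l = F h l.
Proof.
move=> F_lin; rewrite /conv2 /conv2_unit.
rewrite -(counitL_sum (f := fun x => F x l)); last by lin.
apply: eq_bigr => p _; rewrite -(counitL_sum (f := F p.2)); last by lin.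
by rewrite scaler_sumr; apply: eq_bigr => q _; rewrite mulr_algl scalerA.
Qed.

Lemma conv2_unitr F h l : kbilin F -> conv2 F conv2_unit h l = F h l.
Proof.
move=> F_lin; rewrite /conv2 /conv2_unit.
rewrite -(counitR_sum (f := fun x => F x l)); last by lin.
apply: eq_bigr => p _; rewrite -(counitR_sum (f := F p.1)); last by lin.
by rewrite scaler_sumr; apply: eq_bigr => q _; rewrite mulr_algr scalerA.
Qed.

(* [S (x * y)] and [S y * S x] are a right and a left convolution inverse of the
   multiplication, hence equal. *)
Lemma antipodeM h l : S (h * l) = S l * S h.
Proof.
pose SM x y := S (x * y); pose mul (x y : H) := x * y; pose MS x y := S y * S x.
have SM_lin : kbilin SM by rewrite /SM; bilin.
have mul_lin : kbilin mul by rewrite /mul; bilin.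
have MS_lin : kbilin MS by rewrite /MS; bilin.
have mul_SM x y : conv2 mul SM x y = conv2_unit x y.
  rewrite /conv2 /mul /SM /conv2_unit -epsM -antipodeR.
  by symmetry; apply: (DeltaM_sum (b := fun u v => u * S v)); bilin.
have MS_mul x y : conv2 MS mul x y = conv2_unit x y.
  rewrite /conv2 /mul /MS /conv2_unit exchange_big /=.
  transitivity (\sum_(q <- Delta y) S q.1 * (eps x)%:A * q.2).
    apply: eq_bigr => q _; rewrite -antipodeL mulr_sumr mulr_suml.
    by apply: eq_bigr => p _; rewrite !mulrA.
  rewrite -(scalerA (eps x) (eps y) 1) -(antipodeL y) scaler_sumr.
  by apply: eq_bigr => q _; rewrite mulr_algr -scalerAl.
rewrite -[S _]/(SM h l) -(conv2_unitl h l SM_lin).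
rewrite (eq_conv2 _ _ (F' := conv2 MS mul) (G' := SM)) // conv2A //.
by rewrite (eq_conv2 _ _ (F' := MS) (G' := conv2_unit)) // conv2_unitr.
Qed.

Lemma antipode_coprod_unit (M : lmodType k) (c : H -> H -> M) h : kbilin c ->
  \sum_(q <- Delta h) \sum_(y <- Delta q.1) \sum_(r <- Delta q.2)
     c (y.1 * S r.2) (y.2 * S r.1) = eps h *: c 1 1.
Proof.
move=> c_lin.
transitivity (\sum_(q <- Delta h) \sum_(y <- Delta q.2) \sum_(r <- Delta y.2)
   c (q.1 * S r.2) (y.1 * S r.1)).
  symmetry; apply: (coassoc_sum (T := fun a b d =>
    \sum_(r <- Delta d) c (a * S r.2) (b * S r.1))); trilin.
transitivity (\sum_(q <- Delta h) \sum_(y <- Delta q.2) \sum_(r <- Delta y.1)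
   c (q.1 * S y.2) (r.1 * S r.2)).
  apply: eq_bigr => q _.
  by apply: (coassoc_sum (T := fun b d e => c (q.1 * S e) (b * S d))); trilin.
transitivity (\sum_(q <- Delta h) \sum_(y <- Delta q.2) eps y.1 *: c (q.1 * S y.2) 1).
  apply: eq_bigr => q _; apply: eq_bigr => y _.
  by rewrite -(klin_sum (kbilinr c_lin _)) antipodeR (klinZ (kbilinr c_lin _)).
transitivity (\sum_(q <- Delta h) c (q.1 * S q.2) 1).
  by apply: eq_bigr => q _; apply: (counitL_sum (f := fun w => c (q.1 * S w) 1)); lin.
by rewrite -(klin_sum (kbilinl c_lin _)) antipodeR (klinZ (kbilinl c_lin _)).
Qed.

Lemma coprod_antipode_expand (M : lmodType k) (b : H -> H -> M) h : kbilin b ->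
  \sum_(x <- Delta (S h)) b x.1 x.2 =
  \sum_(p <- Delta h) \sum_(q <- Delta p.1) \sum_(x <- Delta (S q.1))
     \sum_(y <- Delta q.2) \sum_(r <- Delta p.2) b (x.1 * y.1 * S r.2) (x.2 * y.2 * S r.1).
Proof.
move=> b_lin.
transitivity (\sum_(p <- Delta h) eps p.2 *: \sum_(x <- Delta (S p.1)) b x.1 x.2).
  by symmetry; apply: (counitR_sum (f := fun z => \sum_(x <- Delta (S z)) b x.1 x.2)); lin.
transitivity (\sum_(p <- Delta h) \sum_(q <- Delta p.2) \sum_(x <- Delta (S p.1))
   \sum_(y <- Delta q.1) \sum_(r <- Delta q.2) b (x.1 * y.1 * S r.2) (x.2 * y.2 * S r.1)).
  apply: eq_bigr => p _; rewrite scaler_sumr exchange_big; apply: eq_bigr => x _.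
  have c_lin : kbilin (fun u v => b (x.1 * u) (x.2 * v)) by bilin.
  have := antipode_coprod_unit p.2 c_lin; rewrite /= !mulr1 => <-.
  apply: eq_bigr => q _.
  by apply: eq_bigr => y _; apply: eq_bigr => r _; rewrite !mulrA.
apply: (coassoc_sum (T := fun a c d => \sum_(x <- Delta (S a))
   \sum_(y <- Delta c) \sum_(r <- Delta d) b (x.1 * y.1 * S r.2) (x.2 * y.2 * S r.1))).
apply: ktrilin_of => ? ? /=; [|lin|lin].
by apply: klin_tensor_sum_pair; [exact: tlin_comp | bilin].
Qed.

Lemma coprod_antipode (M : lmodType k) (b : H -> H -> M) h : kbilin b ->
  \sum_(x <- Delta (S h)) b x.1 x.2 = \sum_(q <- Delta h) b (S q.2) (S q.1).
Proof.
move=> b_lin; rewrite coprod_antipode_expand //.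
rewrite -(counitL_sum (f := fun z => \sum_(r <- Delta z) b (S r.2) (S r.1))); last by lin.
apply: eq_bigr => p _; rewrite scaler_sumr.
transitivity (\sum_(r <- Delta p.2) \sum_(q <- Delta p.1) \sum_(x <- Delta (S q.1))
   \sum_(y <- Delta q.2) b (x.1 * y.1 * S r.2) (x.2 * y.2 * S r.1)).
  rewrite [RHS]exchange_big; apply: eq_bigr => q _.
  by rewrite [RHS]exchange_big; apply: eq_bigr => x _; rewrite exchange_big.
apply: eq_bigr => r _.
have c_lin : kbilin (fun u v => b (u * S r.2) (v * S r.1)) by bilin.
have L_lin : klin (fun z => \sum_(w <- Delta z) b (w.1 * S r.2) (w.2 * S r.1)) by lin.
transitivity (\sum_(q <- Delta p.1) \sum_(w <- Delta (S q.1 * q.2))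
   b (w.1 * S r.2) (w.2 * S r.1)).
  apply: eq_bigr => q _; symmetry.
  by apply: (DeltaM_sum (b := fun u v => b (u * S r.2) (v * S r.1))).
by rewrite -(klin_sum L_lin) antipodeL (klinZ L_lin) (Delta1_sum c_lin) !mul1r.
Qed.

Lemma antipodeR_swap (S_invol : involutive S) h :
  \sum_(p <- Delta h) p.2 * S p.1 = (eps h)%:A.
Proof.
transitivity (S (\sum_(p <- Delta h) p.1 * S p.2)).
  by rewrite (klin_sum S_lin); apply: eq_bigr => p _; rewrite antipodeM S_invol.
by rewrite antipodeR (klinZ S_lin) antipode1.
Qed.

Section AntipodeInverse.
Variable S' : H -> H.
Hypotheses (SK : cancel S S') (KS : cancel S' S).

Lemma klin_antipode_inv : klin S'.
Proof. by move=> a u v; apply: (can_inj SK); rewrite KS (klinD S_lin) (klinZ S_lin) !KS. Qed.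

Lemma antipode_invM x y : S' (x * y) = S' y * S' x.
Proof. by apply: (can_inj SK); rewrite antipodeM !KS. Qed.

Lemma antipode_inv1 : S' 1 = 1.
Proof. by rewrite -{1}antipode1 SK. Qed.

Lemma antipode_invL h : \sum_(p <- Delta h) S' p.2 * p.1 = (eps h)%:A.
Proof.
apply: (can_inj SK); rewrite (klin_sum S_lin).
transitivity (\sum_(p <- Delta h) S p.1 * p.2).
  by apply: eq_bigr => p _; rewrite antipodeM KS.
by rewrite antipodeL (klinZ S_lin) antipode1.
Qed.

End AntipodeInverse.

Section ComoduleAlgebra.
Variable A : algType k.
Variable rhoA : A -> seq (H * A).
Hypothesis rho_lin : tlin rhoA.
Hypothesis rho_coassoc : forall a,
  teq3 [seq (q.1, q.2, p.2) | p <- rhoA a, q <- Delta p.1]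
       [seq (p.1, q.1, q.2) | p <- rhoA a, q <- rhoA p.2].
Hypothesis rho_counit : forall a, \sum_(p <- rhoA a) eps p.1 *: p.2 = a.
Hypothesis rho1 : teq2 (rhoA 1) [:: (1, 1)].

Lemma rho_coassoc_sum (M : lmodType k) (T : H -> H -> A -> M) a : ktrilin T ->
  \sum_(s <- rhoA a) \sum_(t <- Delta s.1) T t.1 t.2 s.2 =
  \sum_(s <- rhoA a) \sum_(t <- rhoA s.2) T s.1 t.1 t.2.
Proof. by move=> T_lin; have := rho_coassoc a T_lin; rewrite !big_allpairs_dep. Qed.

Lemma rho_scalar_sum (M : lmodType k) (G : H -> A -> M) (c : k) : kbilin G ->
  \sum_(q <- rhoA c%:A) G q.1 q.2 = G 1 c%:A.
Proof.
move=> G_lin; rewrite (klinZ (klin_tensor_sum rho_lin G_lin)) (rho1 G_lin) big_seq1.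
by rewrite -(klinZ (kbilinr G_lin 1)).
Qed.

Local Notation RM := (relHopfMod Delta eps rhoA).

Lemma rhm_coassoc_sum (M : RM) (X : lmodType k) (T : H -> H -> M -> X) m : ktrilin T ->
  \sum_(p <- rhm_coact m) \sum_(q <- Delta p.1) T q.1 q.2 p.2 =
  \sum_(p <- rhm_coact m) \sum_(q <- rhm_coact p.2) T p.1 q.1 q.2.
Proof. by move=> T_lin; have := rhm_coassoc m T_lin; rewrite !big_allpairs_dep. Qed.

Lemma rhm_compat_sum (M : RM) (X : lmodType k) (b : H -> M -> X) m a : kbilin b ->
  \sum_(p <- rhm_coact (rhm_act m a)) b p.1 p.2 =
  \sum_(p <- rhm_coact m) \sum_(q <- rhoA a) b (p.1 * q.1) (rhm_act p.2 q.2).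
Proof. by move=> b_lin; rewrite (rhm_compat m a b_lin) big_allpairs_dep. Qed.

Lemma rhm_counit_sum (M : RM) (N : lmodType k) (f : M -> N) m : klin f ->
  \sum_(p <- rhm_coact m) eps p.1 *: f p.2 = f m.
Proof.
move=> f_lin; rewrite -{2}(rhm_counit m) (klin_sum f_lin).
by apply: eq_bigr => p _; rewrite (klinZ f_lin).
Qed.

Lemma rhm_act_scalar (M : RM) (m : M) (c : k) : rhm_act m c%:A = c *: m.
Proof. by rewrite (klinZ (kbilinr (rhm_act_bilin M) m)) rhm_act1. Qed.

Lemma relHopf_hom_coact_sum (M N : RM) (f : M -> N) (X : lmodType k) (b : H -> N -> X) m :
  relHopf_hom f -> kbilin b ->
  \sum_(p <- rhm_coact (f m)) b p.1 p.2 = \sum_(p <- rhm_coact m) b p.1 (f p.2).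
Proof. by move=> [_ f_colin] b_lin; rewrite (f_colin m _ _ b_lin) big_map. Qed.

Section Separability.
Variable gamma : H -> H -> A.
Hypothesis gamma_lin : kbilin gamma.
Hypothesis gamma_integral : forall a c d,
  \sum_(p <- [seq (q.1, q.2, p.2) | p <- rhoA a, q <- Delta p.1])
     p.2 * gamma (c * p.1.1) (d * p.1.2) = gamma c d * a.
Hypothesis gamma_colin : forall c d,
  teq2 [seq (p.1, gamma p.2 d) | p <- Delta c]
       [seq (p.2 * q.1, q.2) | p <- Delta d, q <- rhoA (gamma c p.1)].
Hypothesis gamma_total : forall c, \sum_(p <- Delta c) gamma p.1 p.2 = (eps c)%:A.

Lemma rhm_coact_act_gamma (N : RM) (X : lmodType k) (b : H -> N -> X) (n : N) c :
  kbilin b ->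
  \sum_(q <- rhm_coact n) \sum_(r <- rhm_coact (rhm_act q.2 (gamma c q.1))) b r.1 r.2 =
  \sum_(q <- rhm_coact n) \sum_(r <- Delta c) b r.1 (rhm_act q.2 (gamma r.2 q.1)).
Proof.
move=> b_lin; have act_lin := rhm_act_bilin N.
transitivity (\sum_(q <- rhm_coact n) \sum_(r <- rhm_coact q.2)
     \sum_(s <- rhoA (gamma c q.1)) b (r.1 * s.1) (rhm_act r.2 s.2)).
  by apply: eq_bigr => q _; rewrite (rhm_compat_sum _ _ b_lin).
transitivity (\sum_(q <- rhm_coact n) \sum_(r <- Delta q.1)
     \sum_(s <- rhoA (gamma c r.1)) b (r.2 * s.1) (rhm_act q.2 s.2)).
  symmetry; apply: (rhm_coassoc_sum (T := fun x y z =>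
     \sum_(s <- rhoA (gamma c x)) b (y * s.1) (rhm_act z s.2))).
  apply: ktrilin_of => ? ? /=; [|lin|lin].
  by apply: klin_tensor_sum_pair; [apply: tlin_comp => //; lin | bilin].
apply: eq_bigr => q _.
have b'_lin : kbilin (fun u a => b u (rhm_act q.2 a)) by bilin.
by have := gamma_colin c q.1 b'_lin; rewrite big_map big_allpairs_dep => <-.
Qed.

Definition sep_retraction (M N : RM) (f : M -> N) (m : M) : N :=
  \sum_(p <- rhm_coact m) \sum_(q <- rhm_coact (f p.2)) rhm_act q.2 (gamma p.1 q.1).

Lemma klin_sep_retraction (M N : RM) (f : M -> N) : klin f -> klin (sep_retraction f).
Proof.
move=> f_lin; have coactM_lin := rhm_coact_lin (r := M); have coactN_lin := rhm_coact_lin (r := N).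
by have act_lin := rhm_act_bilin N; rewrite /sep_retraction; lin.
Qed.

Lemma sep_retraction_id (M N : RM) (f : M -> N) :
  relHopf_hom f -> forall m, sep_retraction f m = f m.
Proof.
move=> f_hom m; have act_lin := rhm_act_bilin N; have [[f_lin _] _] := f_hom.
transitivity (\sum_(p <- rhm_coact m) \sum_(q <- rhm_coact p.2)
    rhm_act (f q.2) (gamma p.1 q.1)).
  apply: eq_bigr => p _.
  by apply: (relHopf_hom_coact_sum (b := fun u n => rhm_act n (gamma p.1 u))); last bilin.
rewrite -(rhm_coassoc_sum (T := fun x y z => rhm_act (f z) (gamma x y))); last by trilin.
rewrite -(rhm_counit_sum m f_lin); apply: eq_bigr => p _.
by rewrite -(klin_sum (kbilinr act_lin (f p.2))) gamma_total rhm_act_scalar.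
Qed.

Lemma sep_retraction_act (M N : RM) (f : M -> N) :
  Alin f -> forall m a, sep_retraction f (rhm_act m a) = rhm_act (sep_retraction f m) a.
Proof.
move=> [f_lin f_act] m a; rewrite /sep_retraction.
have act_lin := rhm_act_bilin N; have coactN_lin := rhm_coact_lin (r := N).
have G_lin : kbilin (fun x y =>
  \sum_(q <- rhm_coact (f y)) rhm_act q.2 (gamma x q.1)) by bilin.
rewrite (rhm_compat_sum _ _ G_lin) /=.
transitivity (\sum_(p <- rhm_coact m) \sum_(q <- rhm_coact (f p.2))
   \sum_(s <- rhoA a) \sum_(t <- rhoA s.2) rhm_act q.2 (t.2 * gamma (p.1 * s.1) (q.1 * t.1))).
  apply: eq_bigr => p _; rewrite [RHS]exchange_big; apply: eq_bigr => s _.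
  rewrite f_act (rhm_compat_sum (b := fun u n => rhm_act n (gamma (p.1 * s.1) u))) /=;
    last by bilin.
  by apply: eq_bigr => q _; apply: eq_bigr => t _; rewrite rhm_actM.
rewrite (klin_sum (kbilinl act_lin a)); apply: eq_bigr => p _.
rewrite (klin_sum (kbilinl act_lin a)); apply: eq_bigr => q _.
rewrite rhm_actM -gamma_integral big_allpairs_dep /= (klin_sum (kbilinr act_lin _)).
rewrite -(rho_coassoc_sum (T := fun x y z =>
   rhm_act q.2 (z * gamma (p.1 * x) (q.1 * y)))); last by trilin.
by apply: eq_bigr => s _; rewrite (klin_sum (kbilinr act_lin _)).
Qed.

Lemma sep_retraction_colin (M N : RM) (f : M -> N) : Alin f -> forall m,
  teq2 (rhm_coact (sep_retraction f m)) [seq (p.1, sep_retraction f p.2) | p <- rhm_coact m].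
Proof.
move=> [f_lin _] m X b b_lin; rewrite big_map /sep_retraction.
have act_lin := rhm_act_bilin N; have coactN_lin := rhm_coact_lin (r := N).
have bc_lin : klin (fun x : N => \sum_(r <- rhm_coact x) b r.1 r.2) by lin.
rewrite (klin_sum bc_lin).
transitivity (\sum_(p <- rhm_coact m) \sum_(r <- Delta p.1) \sum_(q <- rhm_coact (f p.2))
   b r.1 (rhm_act q.2 (gamma r.2 q.1))).
  by apply: eq_bigr => p _; rewrite (klin_sum bc_lin) rhm_coact_act_gamma // exchange_big.
rewrite (rhm_coassoc_sum (T := fun x y z => \sum_(q <- rhm_coact (f z))
   b x (rhm_act q.2 (gamma y q.1)))); last first.
  apply: ktrilin_of => ? ? /=; [lin|lin|].
  by apply: klin_tensor_sum_pair; [exact: tlin_comp | bilin].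
apply: eq_bigr => p _; rewrite (klin_sum (kbilinr b_lin _)); apply: eq_bigr => q _.
by rewrite (klin_sum (kbilinr b_lin _)).
Qed.

Lemma sep_retraction_hom (M N : RM) (f : M -> N) : Alin f -> relHopf_hom (sep_retraction f).
Proof.
move=> f_Alin; split; last exact: sep_retraction_colin.
by split; [apply: klin_sep_retraction; case: f_Alin | exact: sep_retraction_act].
Qed.

Lemma sep_retraction_natural (M' M N N' : RM) (g : M' -> M) (f : M -> N) (h : N -> N') :
  relHopf_hom g -> Alin f -> relHopf_hom h ->
  forall m, sep_retraction (fun x => h (f (g x))) m = h (sep_retraction f (g m)).
Proof.
move=> g_hom [f_lin _] h_hom m; rewrite /sep_retraction.
have [[h_lin h_act] _] := h_hom.
have act_lin := rhm_act_bilin N; have act'_lin := rhm_act_bilin N'.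
have coactN_lin := rhm_coact_lin (r := N).
rewrite (relHopf_hom_coact_sum (b := fun x y =>
   \sum_(q <- rhm_coact (f y)) rhm_act q.2 (gamma x q.1))) //; last by bilin.
rewrite (klin_sum h_lin); apply: eq_bigr => p _; rewrite (klin_sum h_lin).
rewrite (relHopf_hom_coact_sum (b := fun u n => rhm_act n (gamma p.1 u))) //; last by bilin.
by apply: eq_bigr => q _; rewrite h_act.
Qed.

End Separability.

Lemma total_integral_forget_separable gamma :
  is_total_A_integral Delta eps rhoA gamma -> forget_separable Delta eps rhoA.
Proof.
case=> -[gamma_lin gamma_integral gamma_colin] gamma_total.
exists (sep_retraction gamma); split.
- by move=> M N f; apply: sep_retraction_hom.
- by move=> M N f; apply: sep_retraction_id.
- by move=> M' M N N' g f h; apply: sep_retraction_natural.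
Qed.

Section PhiIntegral.
Variable phi : H -> A.
Hypothesis phi_lin : klin phi.
Hypothesis phi_colin : forall h, teq2 (rhoA (phi h)) [seq (p.1, phi p.2) | p <- Delta h].
Hypothesis phi1 : phi 1 = 1.

Definition gamma_phi h l := phi (h * S l).

Lemma gamma_phi_bilin : kbilin gamma_phi.
Proof. by rewrite /gamma_phi; bilin. Qed.

Lemma gamma_phi_total c : \sum_(p <- Delta c) gamma_phi p.1 p.2 = (eps c)%:A.
Proof. by rewrite /gamma_phi -(klin_sum phi_lin) antipodeR (klinZ phi_lin) phi1. Qed.

Lemma gamma_phi_integral (phi_central : forall h a, phi h * a = a * phi h) a c d :
  \sum_(p <- [seq (q.1, q.2, p.2) | p <- rhoA a, q <- Delta p.1])
     p.2 * gamma_phi (c * p.1.1) (d * p.1.2) = gamma_phi c d * a.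
Proof.
rewrite big_allpairs_dep /= /gamma_phi.
transitivity (\sum_(p <- rhoA a) (eps p.1 *: p.2) * phi (c * S d)); last first.
  by rewrite -mulr_suml rho_counit phi_central.
apply: eq_bigr => p _; rewrite -scalerAl.
have F_lin : klin (fun x => p.2 * phi (c * x * S d)) by lin.
transitivity (\sum_(q <- Delta p.1) p.2 * phi (c * (q.1 * S q.2) * S d)).
  by apply: eq_bigr => q _; rewrite antipodeM !mulrA.
by rewrite -(klin_sum F_lin) antipodeR (klinZ F_lin) mulr1.
Qed.

Lemma phi_coaction_sum (M : lmodType k) (G : H -> A -> M) x : kbilin G ->
  \sum_(q <- rhoA (phi x)) G q.1 q.2 = \sum_(r <- Delta x) G r.1 (phi r.2).
Proof. by move=> G_lin; rewrite (phi_colin x G_lin) big_map. Qed.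

Lemma gamma_phi_coaction (M : lmodType k) (G : H -> A -> M) c l : kbilin G ->
  \sum_(q <- rhoA (gamma_phi c l)) G q.1 q.2 =
  \sum_(s <- Delta c) \sum_(t <- Delta (S l)) G (s.1 * t.1) (phi (s.2 * t.2)).
Proof.
move=> G_lin; rewrite phi_coaction_sum //.
by apply: (DeltaM_sum (b := fun u v => G u (phi v))); bilin.
Qed.

Section TraceCase.
Hypothesis S_invol : involutive S.
Hypothesis phi_trace : forall h l, phi (h * l) = phi (l * h).

(* Colinearity of [phi] transports the trace property from the second tensor
   factor to the first. *)
Lemma phi_trace_swap (M : lmodType k) (G : H -> A -> M) a b : kbilin G ->
  \sum_(s <- Delta a) \sum_(t <- Delta b) G (s.1 * t.1) (phi (s.2 * t.2)) =
  \sum_(s <- Delta a) \sum_(t <- Delta b) G (t.1 * s.1) (phi (s.2 * t.2)).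
Proof.
move=> G_lin; have G'_lin : kbilin (fun u v => G u (phi v)) by bilin.
rewrite -(DeltaM_sum _ _ G'_lin) -(phi_coaction_sum _ G_lin) phi_trace.
rewrite (phi_coaction_sum _ G_lin) (DeltaM_sum _ _ G'_lin) /= exchange_big.
by apply: eq_bigr => s _; apply: eq_bigr => t _; rewrite phi_trace.
Qed.

Lemma gamma_phi_colin_trace c d :
  teq2 [seq (p.1, gamma_phi p.2 d) | p <- Delta c]
       [seq (p.2 * q.1, q.2) | p <- Delta d, q <- rhoA (gamma_phi c p.1)].
Proof.
move=> M b b_lin; rewrite big_map big_allpairs_dep /=; symmetry.
transitivity (\sum_(p <- Delta d) \sum_(s <- Delta c) \sum_(t <- Delta (S p.1))
   b (p.2 * (t.1 * s.1)) (phi (s.2 * t.2))).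
  apply: eq_bigr => p _; rewrite (gamma_phi_coaction (G := fun u a => b (p.2 * u) a));
    last by bilin.
  by apply: (phi_trace_swap (G := fun u a => b (p.2 * u) a)); bilin.
transitivity (\sum_(p <- Delta d) \sum_(t <- Delta p.1) \sum_(s <- Delta c)
   b (p.2 * (S t.2 * s.1)) (phi (s.2 * S t.1))).
  apply: eq_bigr => p _; rewrite exchange_big /=.
  apply: (coprod_antipode (b := fun x y =>
    \sum_(s <- Delta c) b (p.2 * (x * s.1)) (phi (s.2 * y)))); bilin.
transitivity (\sum_(p <- Delta d) \sum_(t <- Delta p.2) \sum_(s <- Delta c)
   b (t.2 * (S t.1 * s.1)) (phi (s.2 * S p.1))).
  symmetry; apply: (coassoc_sum (T := fun x y z => \sum_(s <- Delta c)
     b (z * (S y * s.1)) (phi (s.2 * S x)))); trilin.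
rewrite -(counitR_sum (f := fun z => \sum_(s <- Delta c) b s.1 (phi (s.2 * S z))));
  last by lin.
apply: eq_bigr => p _; rewrite exchange_big scaler_sumr; apply: eq_bigr => s _.
have F_lin : klin (fun x => b (x * s.1) (phi (s.2 * S p.1))) by lin.
transitivity (\sum_(t <- Delta p.2) b (t.2 * S t.1 * s.1) (phi (s.2 * S p.1))).
  by apply: eq_bigr => t _; rewrite mulrA.
by rewrite -(klin_sum F_lin) antipodeR_swap // (klinZ F_lin) mul1r.
Qed.

End TraceCase.

Section ScalarCase.
Variable S' : H -> H.
Hypotheses (SK : cancel S S') (KS : cancel S' S).
Hypothesis phi_scalar : forall h, exists c : k, phi h = c%:A.

Lemma phi_scalar_coaction (M : lmodType k) (G : H -> A -> M) x : kbilin G ->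
  \sum_(q <- rhoA (phi x)) G q.1 q.2 = G 1 (phi x).
Proof. by have [c ->] := phi_scalar x; apply: rho_scalar_sum. Qed.

Lemma gamma_phi_colin_scalar c d :
  teq2 [seq (p.1, gamma_phi p.2 d) | p <- Delta c]
       [seq (p.2 * q.1, q.2) | p <- Delta d, q <- rhoA (gamma_phi c p.1)].
Proof.
move=> M b b_lin; rewrite big_map big_allpairs_dep /=.
have S'_lin := klin_antipode_inv SK KS.
transitivity (\sum_(p <- Delta d) b p.2 (phi (c * S p.1))); last first.
  apply: eq_bigr => p _.
  by rewrite (phi_scalar_coaction (G := fun u a => b (p.2 * u) a)) ?mulr1; last bilin.
transitivity (\sum_(p <- Delta c) \sum_(s <- Delta p.2) \sum_(t <- Delta (S d))
   b (S' (s.1 * t.1) * p.1) (phi (s.2 * t.2))).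
  apply: eq_bigr => p _.
  have G_lin : kbilin (fun u a => b (S' u * p.1) a) by bilin.
  rewrite -(gamma_phi_coaction _ _ G_lin) /gamma_phi.
  by rewrite (phi_scalar_coaction _ G_lin) /= (antipode_inv1 SK) mul1r.
transitivity (\sum_(p <- Delta c) \sum_(s <- Delta p.2) \sum_(t <- Delta d)
   b (t.2 * S' s.1 * p.1) (phi (s.2 * S t.1))).
  apply: eq_bigr => p _; apply: eq_bigr => s _.
  rewrite (coprod_antipode (b := fun x y => b (S' (s.1 * x) * p.1) (phi (s.2 * y))));
    last by bilin.
  by apply: eq_bigr => t _; rewrite antipode_invM // SK.
transitivity (\sum_(p <- Delta c) \sum_(s <- Delta p.1) \sum_(t <- Delta d)
   b (t.2 * S' s.2 * s.1) (phi (p.2 * S t.1))).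
  by apply: (coassoc_sum (T := fun x y z =>
    \sum_(t <- Delta d) b (t.2 * S' y * x) (phi (z * S t.1)))); trilin.
rewrite -(counitL_sum (f := fun z => \sum_(t <- Delta d) b t.2 (phi (z * S t.1))));
  last by lin.
apply: eq_bigr => p _; rewrite exchange_big scaler_sumr; apply: eq_bigr => t _.
have F_lin : klin (fun x => b (t.2 * x) (phi (p.2 * S t.1))) by lin.
transitivity (\sum_(s <- Delta p.1) b (t.2 * (S' s.2 * s.1)) (phi (p.2 * S t.1))).
  by apply: eq_bigr => s _; rewrite mulrA.
by rewrite -(klin_sum F_lin) (antipode_invL SK KS) (klinZ F_lin) mulr1.
Qed.

End ScalarCase.

Lemma gamma_phi_total_integral
  (cases : [/\ involutive S, (forall h a, phi h * a = a * phi h) &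
                (forall h l, phi (h * l) = phi (l * h))]
           \/ (bijective S /\ forall h, exists c : k, phi h = c%:A)) :
  is_total_A_integral Delta eps rhoA gamma_phi.
Proof.
have phi_central : forall h a, phi h * a = a * phi h.
  case: cases => [[] // | [_ phi_scalar] h a].
  by have [c ->] := phi_scalar h; rewrite mulr_algl mulr_algr.
split; last exact: gamma_phi_total.
split; [exact: gamma_phi_bilin | exact: gamma_phi_integral |].
case: cases => [[S_invol _ phi_trace] | [[S' SK KS] phi_scalar]] c d.
- exact: gamma_phi_colin_trace.
- exact: gamma_phi_colin_scalar SK KS phi_scalar c d.
Qed.

End PhiIntegral.
End ComoduleAlgebra.
End HopfAlgebra.

Theorem corollary3p1p4 (k : comPzRingType) (H : algType k)
  (Delta : H -> seq (H * H)) (eps : H -> k) (S : H -> H)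
  (hopfH : is_hopf Delta eps S) (projH : kprojective H)
  (A : algType k) (rhoA : A -> seq (H * A)) (comodA : is_comod_alg Delta eps rhoA)
  (phi : H -> A) (phi_lin : klin phi)
  (phi_colin : forall h, teq2 (rhoA (phi h)) [seq (p.1, phi p.2) | p <- Delta h])
  (phi1 : phi 1 = 1)
  (hyp : [/\ forall h, S (S h) = h,
             (forall h a, phi h * a = a * phi h) &
             (forall h l, phi (h * l) = phi (l * h))]
         \/ (bijective S /\ forall h, exists c : k, phi h = c%:A)) :
  is_total_A_integral Delta eps rhoA (fun h l => phi (h * S l))
  /\ forget_separable Delta eps rhoA.
Proof.
case: hopfH => Delta_lin [coassoc [_ [counitL [counitR [DeltaM [Delta1 [epsM [eps1
  [S_lin [antipodeL antipodeR]]]]]]]]]].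
case: comodA => rho_lin rho_coassoc rho_counit _ rho1.
have integral : is_total_A_integral Delta eps rhoA (fun h l => phi (h * S l)).
  by apply: gamma_phi_total_integral.
by split; last exact: total_integral_forget_separable integral.
Qed.
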